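(* Let $G=(V,E)$ be a finite, simple, undirected, unweighted graph, let $h$ be a positive integer, let $v\in V$, let $u\in N_v^h(G)$ and put $s=dis_G(u,v)$. Then for every $w\in N_v^{h-s}(G)$, $$dis_{G(V\setminus\{v\})}(u,w)\le h \iff dis_{G(N_v^h(G))}(u,w)\le h .$$ Consequently, with $F_u=\{w\in N_v^{h-s}(G): dis_{G(V\setminus\{v\})}(u,w)>h\}$, one has $F_u=\{w\in N_v^{h-s}(G): dis_{G(N_v^h(G))}(u,w)>h\}$ and $$d_u^h\big(G(V\setminus\{v\})\big)=d_u^h(G)-1-\big|\{w\in N_v^{h-s}(G): dis_{G(N_v^h(G))}(u,w)>h\}\big|.$$
   Context: For a graph $H$ and vertices $x,y$ of $H$, $dis_H(x,y)$ denotes the shortest-path distance between $x$ and $y$ in $H$ (equal to $+\infty$ if no path exists). For a nonnegative integer $t$, the $t$-hop neighborhood of a vertex $x$ in $H=(V_H,E_H)$ is $N_x^t(H)=\{y\in V_H : y\neq x,\ dis_H(x,y)\le t\}$, and the $t$-hop degree is $d_x^t(H)=|N_x^t(H)|$. For $S\subseteq V$, $G(S)$ denotes the subgraph of $G$ induced by $S$. *)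

(* A finite simple undirected graph is a symmetric,
   irreflexive relation e on a finType T (vertex set V = [set: T]).
   Induced subgraphs G(S) are described by the vertex set S : {set T}. *)
From mathcomp Require Import all_boot all_order all_algebra.
Set Implicit Arguments. Unset Strict Implicit. Unset Printing Implicit Defensive.

Section Graph.
Variables (T : finType) (e : rel T).

(* dis_{G(S)}(x,y) <= k : there is a walk x = x_0, x_1, ..., x_j = y in G
   with j <= k, all of whose vertices lie in S. *)
Definition dis_le (S : {set T}) (x y : T) (k : nat) : bool :=
  [exists j : 'I_k.+1, [exists p : j.-tuple T,
     [&& x \in S, all (fun z => z \in S) p, path e x p & last x p == y]]].

Definition dis_eq (S : {set T}) (x y : T) (s : nat) : bool :=
  dis_le S x y s && [forall k : 'I_s, ~~ dis_le S x y k].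

Definition nbhd (S : {set T}) (x : T) (t : nat) : {set T} :=
  [set y in S | (y != x) && dis_le S x y t].

Definition hdeg (S : {set T}) (x : T) (t : nat) : nat := #|nbhd S x t|.
End Graph.

From mathcomp Require Import all_boot all_order all_algebra.
From mathcomp Require Import zify.
Set Implicit Arguments. Unset Strict Implicit. Unset Printing Implicit Defensive.

(* After the basic walk
   calculus (concatenation, reversal, splitting a walk at an inner vertex),
   two facts carry the argument.
   - [short_walk_in_ball]: a walk of length <= h from u to a vertex w with
     dis(v,w) <= h - s never leaves the h-ball around v; hence the distance
     <= h test from u to such a w gives the same answer in G(V \ v) and in
     G(N_v^h).
   - [nbhd_setD1_partition]: N_u^h(G) \ {v} splits disjointly into
     N_u^h(G(V \ v)) and the set F_u of vertices w with dis(v,w) <= h - s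
     that G(V \ v) does not reach within h hops (every short walk to them
     goes through v).  Counting both sides gives the degree formula. *)

Section Walks.
Variables (T : finType) (e : rel T).

Lemma dis_leP (S : {set T}) x y k :
  reflect (exists p : seq T, [/\ size p <= k, x \in S, all (mem S) p,
                                  path e x p & last x p = y])
          (dis_le e S x y k).
Proof.
apply: (iffP existsP).
  move=> [j /existsP [p /and4P [xS pS pp /eqP lp]]].
  by exists (val p); rewrite size_tuple -ltnS ltn_ord.
move=> [p [sz xS pS pp lp]].
have Hj : size p < k.+1 by [].
exists (Ordinal Hj); apply/existsP; exists (in_tuple p).
by rewrite /= xS pS pp lp eqxx.
Qed.

Lemma dis_le_mono (S S' : {set T}) x y k k' :
  S \subset S' -> k <= k' -> dis_le e S x y k -> dis_le e S' x y k'.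
Proof.
move=> sS kk /dis_leP [p [sz xS pS pp lp]]; apply/dis_leP; exists p; split => //.
- exact: leq_trans kk.
- exact: (subsetP sS).
- by apply/allP => z zp; apply: (subsetP sS); exact: (allP pS).
Qed.

Lemma dis_le_refl (S : {set T}) x k : x \in S -> dis_le e S x x k.
Proof. by move=> xS; apply/dis_leP; exists [::]. Qed.

Lemma dis_le_cat (S : {set T}) x y z a b :
  dis_le e S x y a -> dis_le e S y z b -> dis_le e S x z (a + b).
Proof.
move=> /dis_leP [p [sz xS pS pp lp]] /dis_leP [q [sz' yS qS qp lq]].
apply/dis_leP; exists (p ++ q); split => //.
- by rewrite size_cat leq_add.
- by rewrite all_cat pS.
- by rewrite cat_path pp lp.
- by rewrite last_cat lp.
Qed.

Lemma dis_le_split (S : {set T}) x y z k p :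
  size p <= k -> x \in S -> all (mem S) p -> path e x p -> last x p = y ->
  z \in x :: p ->
  exists i j, [/\ i + j <= k, dis_le e S x z i & dis_le e S z y j].
Proof.
move=> sz xS pS pp lp zp; case/splitPl: zp sz pS pp lp => p1 p2 l1.
rewrite size_cat all_cat cat_path last_cat l1.
move=> sz /andP [p1S p2S] /andP [pp1 pp2] lp.
exists (size p1), (size p2); split => //; first by apply/dis_leP; exists p1.
apply/dis_leP; exists p2; split => //.
rewrite -l1; have := mem_last x p1; rewrite inE => /orP [/eqP -> //|].
exact: (allP p1S).
Qed.

Lemma dis_le_mem (S : {set T}) x y k :
  dis_le e S x y k -> (x \in S) && (y \in S).
Proof.
move=> /dis_leP [p [_ xS pS _ <-]]; rewrite xS /=.
by have := mem_last x p; rewrite inE => /orP [/eqP -> | /(allP pS)].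
Qed.

Lemma dis_eq_min (S : {set T}) x y s k :
  dis_eq e S x y s -> dis_le e S x y k -> s <= k.
Proof.
case/andP=> _ /forallP smin Hk; rewrite leqNgt; apply/negP => lt.
by have := smin (Ordinal lt); rewrite Hk.
Qed.

Lemma nbhd_sub_setD1 (S : {set T}) v t : nbhd e S v t \subset S :\ v.
Proof. by apply/subsetP => z; rewrite !inE => /andP [zS /andP [-> _]]. Qed.

Hypothesis e_sym : symmetric e.

Lemma dis_le_sym (S : {set T}) x y k : dis_le e S x y k -> dis_le e S y x k.
Proof.
move=> /dis_leP [p [sz xS pS pp lp]]; apply/dis_leP.
case/lastP: p sz pS pp lp => [|q z] sz pS pp lp; first by exists [::]; rewrite -lp.
rewrite last_rcons in lp; subst z.
rewrite size_rcons in sz; rewrite all_rcons in pS; case/andP: pS => yS qS.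
exists (rev (x :: q)); rewrite size_rev /=; split => //.
- by rewrite all_rev /= xS qS.
- have := rev_path e x (rcons q y); rewrite belast_rcons last_rcons => ->.
  by rewrite (eq_path (e' := e)) // => a b; rewrite /= e_sym.
- by rewrite rev_cons last_rcons.
Qed.

Section NearbyVertex.
Variables (S : {set T}) (h s : nat) (v u : T).
Hypotheses (s_le_h : s <= h) (vu_le_s : dis_le e S v u s).

(* Every vertex on a walk of length <= h from u to some w with
   dis(v,w) <= h - s lies within distance h of v: a vertex at distance i
   along the walk is within s + i of v and within (h - s) + (h - i) of v. *)
Lemma short_walk_in_ball w p z :
  dis_le e S v w (h - s) -> size p <= h -> all (mem S) p ->
  path e u p -> last u p = w -> z \in u :: p -> dis_le e S v z h.
Proof.
move=> vw sz pS pp lp zp.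
have /andP [_ uS] := dis_le_mem vu_le_s.
have [i [j [ij uz zw]]] := dis_le_split sz uS pS pp lp zp.
case: (leqP i (h - s)) => hi.
  by apply: dis_le_mono (subxx _) _ (dis_le_cat vu_le_s uz); lia.
by apply: dis_le_mono (subxx _) _ (dis_le_cat vw (dis_le_sym zw)); lia.
Qed.

Lemma dis_le_setD1_nbhd w :
  u != v -> dis_le e S v w (h - s) ->
  dis_le e (S :\ v) u w h = dis_le e (nbhd e S v h) u w h.
Proof.
move=> unv vw; apply/idP/idP; last exact/dis_le_mono/leqnn/nbhd_sub_setD1.
move=> /dis_leP [p [sz uSv pS pp lp]].
have pS' : all (mem S) p by apply: sub_all pS => y /setD1P [].
have in_ball z : z \in u :: p -> z \in nbhd e S v h.
  move=> zp; have : z \in S :\ v.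
    by move: zp; rewrite inE => /orP [/eqP -> | /(allP pS)].
  rewrite !inE => /andP [-> ->] /=.
  exact: short_walk_in_ball vw sz pS' pp lp zp.
apply/dis_leP; exists p; split => //; first by apply: in_ball; rewrite mem_head.
by apply/allP => z zp; apply: in_ball; rewrite inE zp orbT.
Qed.

Hypothesis uv_eq_s : dis_eq e S u v s.

Definition far_set : {set T} :=
  [set w in nbhd e S v (h - s) | ~~ dis_le e (S :\ v) u w h].

(* Deleting v from N_u^h(G(S)) leaves N_u^h(G(S \ v)) together with the far
   set: a short walk from u to a vertex outside N_u^h(G(S \ v)) must pass
   through v, after which at most h - s steps remain. *)
Lemma nbhd_setD1_partition :
  u != v -> nbhd e S u h :\ v = nbhd e (S :\ v) u h :|: far_set.
Proof.
move=> unv; have /andP [_ uS] := dis_le_mem vu_le_s.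
have uSv : u \in S :\ v by rewrite !inE unv.
apply/setP => y; rewrite !inE.
case Dy: (dis_le e (S :\ v) u y h); rewrite /= ?andbT ?andbF ?orbF ?orFb.
  by rewrite (dis_le_mono (subsetDl _ _) (leqnn _) Dy) andbT !andbA.
apply/idP/idP.
  case/andP => ynv /and3P [yS ynu /dis_leP [p [sz _ pS pp lp]]].
  rewrite ynv yS /=.
  have vp : v \in u :: p.
    apply/negPn/negP => vnp; move/negbT/negP: Dy; apply.
    apply/dis_leP; exists p; split => //.
    apply/allP => z zp; have zS : z \in S := allP pS z zp.
    rewrite !inE zS andbT.
    by apply: contraNneq vnp => <-; rewrite inE zp orbT.
  have [i [j [ij ui vy]]] := dis_le_split sz uS pS pp lp vp.
  have si := dis_eq_min uv_eq_s ui.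
  by apply: dis_le_mono (subxx _) _ vy; lia.
case/and3P => yS ynv vy; rewrite ynv yS /=; apply/andP; split.
  by apply: contraFneq Dy => ->; exact: dis_le_refl.
by apply: dis_le_mono (subxx _) _ (dis_le_cat (dis_le_sym vu_le_s) vy); lia.
Qed.

Lemma hdeg_setD1 :
  u != v -> hdeg e S u h = (1 + hdeg e (S :\ v) u h + #|far_set|)%N.
Proof.
move=> unv; have /andP [vS _] := dis_le_mem vu_le_s.
have vN : v \in nbhd e S u h.
  by rewrite !inE vS eq_sym unv; apply: dis_le_mono (subxx _) s_le_h _;
    case/andP: uv_eq_s.
have disj : [disjoint nbhd e (S :\ v) u h & far_set].
  by rewrite -setI_eq0; apply/eqP/setP => y; rewrite !inE;
    case: (dis_le e (S :\ v) u y h); rewrite ?andbF ?andbT ?andFb.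
by rewrite /hdeg (cardsD1 v) vN nbhd_setD1_partition // cardsU
  (disjoint_setI0 disj) cards0 subn0 addnA.
Qed.

End NearbyVertex.
End Walks.

Theorem mainTheorem4 (T : finType) (e : rel T)
    (e_sym : symmetric e) (e_irr : irreflexive e)
    (h : nat) (h_pos : 0 < h) (v u : T) (s : nat)
    (hu : u \in nbhd e [set: T] v h)
    (hs : dis_eq e [set: T] u v s) :
  (forall w, w \in nbhd e [set: T] v (h - s) ->
     (dis_le e ([set: T] :\ v) u w h <-> dis_le e (nbhd e [set: T] v h) u w h))
  /\ [set w in nbhd e [set: T] v (h - s) | ~~ dis_le e ([set: T] :\ v) u w h]
     = [set w in nbhd e [set: T] v (h - s) | ~~ dis_le e (nbhd e [set: T] v h) u w h]
  /\ ((hdeg e ([set: T] :\ v) u h)%:Z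
      = (hdeg e [set: T] u h)%:Z - 1
        - (#|[set w in nbhd e [set: T] v (h - s)
               | ~~ dis_le e (nbhd e [set: T] v h) u w h]|)%:Z)%R.
Proof.
have /andP [unv vu_h] : (u != v) && dis_le e [set: T] v u h.
  by move: hu; rewrite !inE.
have vu_s : dis_le e [set: T] v u s by apply: dis_le_sym => //; case/andP: hs.
have s_le_h : s <= h := dis_eq_min hs (dis_le_sym e_sym vu_h).
have same_test w : w \in nbhd e [set: T] v (h - s) ->
    dis_le e ([set: T] :\ v) u w h = dis_le e (nbhd e [set: T] v h) u w h.
  by rewrite !inE => /and3P [_ _ vw]; exact: (dis_le_setD1_nbhd e_sym s_le_h vu_s).
have same_far : far_set e [set: T] h s v u
    = [set w in nbhd e [set: T] v (h - s) | ~~ dis_le e (nbhd e [set: T] v h) u w h].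
  by apply/setP => w; rewrite [LHS]inE [RHS]inE; apply: andb_id2l => /same_test ->.
split; first by move=> w /same_test ->.
split; first exact: same_far.
by rewrite -same_far (hdeg_setD1 e_sym s_le_h vu_s hs unv); lia.
Qed.
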